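(* In the setting below, for any epoch $t$ and all honest nodes $k\in\mathcal{G}$: (a) $\|\mu_t^{(k)}-\nabla f(\tilde{x}_{t-1})\|\le\mathcal{V}$; (b) $\|\mu_t^{(k)}-\mu_t^{\mathrm{med}}\|\le4\mathcal{V}$ and $\|\mu_t^{\mathrm{med}}-\nabla f(\tilde{x}_{t-1})\|\le3\mathcal{V}$.
   Context: Setting: $f(x)=\mathbb{E}_{\xi\sim\mathcal{D}}f(x;\xi)$ with $\|\nabla f(x;\xi)-\nabla f(x)\|\le\mathcal{V}$ for all $x$ and all $\xi\sim\mathcal{D}$. There are $K$ worker nodes; the honest set $\mathcal{G}$ satisfies $|\mathcal{G}|\ge(1-\alpha)K$ with $\alpha\in[0,1/2)$, others Byzantine. At epoch $t$, each $k\in\mathcal{G}$ sends $\mu_t^{(k)}=\frac{1}{B_t}\sum_{i=1}^{B_t}\nabla f(\tilde{x}_{t-1};\xi_{t,i}^{(k)})$ with $\xi_{t,i}^{(k)}\sim\mathcal{D}$; each Byzantine node sends an arbitrary vector. Here $\mu_t^{\mathrm{med}}$ is defined (as in the fallback rule of the algorithm) as $\mu_t^{(k)}$ for any node $k$ such that $|\{k'\in[K]:\|\mu_t^{(k')}-\mu_t^{(k)}\|\le2\mathcal{V}\}|>K/2$. *)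

From HB Require Import structures.
From mathcomp Require Import all_boot all_order all_algebra.
From mathcomp Require Import all_classical all_reals all_analysis.
Set Implicit Arguments. Unset Strict Implicit. Unset Printing Implicit Defensive.
Import Order.TTheory GRing.Theory Num.Theory.
Import numFieldNormedType.Exports.
Local Open Scope ring_scope.

Definition minibatch {R : realType} {E : normedModType R} {X Xi : Type}
  (gradF : X -> Xi -> E) (B : nat) (x : X) (xi : nat -> Xi) : E :=
  (B%:R)^-1 *: \sum_(i < B) gradF x (xi i).

(* The "median" selection rule: node k is admissible as mu^med if strictly
   more than K/2 nodes k' satisfy ||mu k' - mu k|| <= 2V. *)
Definition is_med {R : realType} {E : normedModType R} {K : nat}
  (mu : 'I_K -> E) (V : R) (k : 'I_K) : Prop :=
  (K%:R / 2 < (#|[set k' : 'I_K | `|mu k' - mu k| <= 2 * V]|)%:R :> R).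

From HB Require Import structures.
From mathcomp Require Import all_boot all_order all_algebra.
From mathcomp Require Import all_classical all_reals all_analysis.
From mathcomp Require Import lra.
Import Order.TTheory GRing.Theory Num.Theory.
Import numFieldNormedType.Exports.
Local Open Scope ring_scope.

(* An average of vectors lying in the closed ball of radius V around the true
   gradient lies in that ball, which gives (a).  The admissibility of mu^med
   says that more than K/2 nodes are 2V-close to it, while at least
   (1 - alpha) K > K/2 nodes are honest; so some honest node j is 2V-close to
   mu^med, and (b) follows from the triangle inequality through mu^(j) and
   through the true gradient. *)

Lemma norm_avg_sub_le (R : numFieldType) (E : normedModType R) (n : nat)
    (u : 'I_n -> E) (c : E) (r : R) :
  (0 < n)%N -> (forall i, `|u i - c| <= r) ->
  `|(n%:R)^-1 *: \sum_(i < n) u i - c| <= r.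
Proof.
move=> n_gt0 ucr; have n_neq0 : (n%:R : R) != 0 by rewrite pnatr_eq0 -lt0n.
have -> : c = (n%:R)^-1 *: \sum_(i < n) c.
  by rewrite sumr_const card_ord -[c *+ n]scaler_nat scalerA mulVf // scale1r.
rewrite -scalerBr -sumrB normrZ ger0_norm ?invr_ge0 ?ler0n //.
rewrite ler_pdivrMl ?ltr0n // mulr_natl -[n in r *+ n]card_ord -sumr_const.
by apply: le_trans (ler_norm_sum _ _ _) _; apply: ler_sum => i _.
Qed.

Lemma minibatch_sub_le (R : realType) (E : normedModType R) (X Xi : Type)
    (gradF : X -> Xi -> E) (c : E) (V : R) (B : nat) (x : X) (xi : nat -> Xi) :
  (0 < B)%N -> (forall i, `|gradF x (xi i) - c| <= V) ->
  `|minibatch gradF B x xi - c| <= V.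
Proof. by move=> B_gt0 hV; apply: norm_avg_sub_le => // i; apply: hV. Qed.

Lemma card_setI_gt0 (T : finType) (A B : {set T}) :
  (#|T| < #|A| + #|B|)%N -> (0 < #|A :&: B|)%N.
Proof.
rewrite -cardsUI lt0n => lt_T_UI; apply: contraTneq lt_T_UI => ->.
by rewrite addn0 -leqNgt max_card.
Qed.

Lemma majority_honest_card_lt (R : realFieldType) (K s g : nat) (alpha : R) :
  alpha < 1 / 2 -> (1 - alpha) * K%:R <= g%:R -> K%:R / 2 < s%:R :> R ->
  (K < s + g)%N.
Proof.
move=> alpha_lt honest_g med_s; rewrite -(ltr_nat R) natrD.
have : 0 <= (1 / 2 - alpha) * K%:R by rewrite mulr_ge0 ?ler0n // subr_ge0 ltW.
by rewrite mulrBl; lra.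
Qed.

Lemma is_med_honest_close {R : realType} {E : normedModType R} {K : nat}
    {mu : 'I_K -> E} {V alpha : R} {G : {set 'I_K}} {kmed : 'I_K} :
  alpha < 1 / 2 -> (1 - alpha) * K%:R <= #|G|%:R -> is_med mu V kmed ->
  exists2 j, j \in G & `|mu j - mu kmed| <= 2 * V.
Proof.
move=> alpha_lt honest_G med_kmed.
set S := [set k | `|mu k - mu kmed| <= 2 * V] in med_kmed.
have : (#|'I_K| < #|S| + #|G|)%N.
  by rewrite card_ord; apply: majority_honest_card_lt honest_G med_kmed.
move/card_setI_gt0/card_gt0P => [j]; rewrite !inE => /andP[close_j G_j].
by exists j.
Qed.

Theorem lemma6 (R : realType) (E : normedModType R) (X Xi : Type)
  (gradF : X -> Xi -> E) (grad : X -> E) (V : R)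
  (hV : forall (x : X) (xi : Xi), `|gradF x xi - grad x| <= V)
  (K : nat) (alpha : R) (G : {set 'I_K})
  (halpha0 : 0 <= alpha) (halpha1 : alpha < 1 / 2)
  (hG : (1 - alpha) * K%:R <= (#|G|)%:R)
  (B : nat -> nat) (xtil : nat -> X)
  (samples : nat -> 'I_K -> nat -> Xi)
  (mu : nat -> 'I_K -> E)
  (hB : forall t, (0 < B t)%N)
  (hhonest : forall t k, k \in G ->
     mu t k = minibatch gradF (B t) (xtil t.-1) (samples t k))
  (t : nat) :
  (forall k, k \in G -> `|mu t k - grad (xtil t.-1)| <= V) /\
  (forall kmed : 'I_K, is_med (mu t) V kmed ->
     (forall k, k \in G -> `|mu t k - mu t kmed| <= 4 * V) /\
     `|mu t kmed - grad (xtil t.-1)| <= 3 * V).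
Proof.
set g := grad (xtil t.-1).
have honest_close k : k \in G -> `|mu t k - g| <= V.
  by move=> G_k; rewrite hhonest //; apply: minibatch_sub_le.
clearbody g; split=> // kmed med_kmed.
have [j G_j close_j] := is_med_honest_close halpha1 hG med_kmed.
have med_close : `|mu t kmed - g| <= 3 * V.
  apply: le_trans (ler_distD (mu t j) _ _) _.
  by move: close_j (honest_close j G_j); rewrite distrC; lra.
split=> // k G_k; apply: le_trans (ler_distD g _ _) _.
by move: med_close (honest_close k G_k); rewrite [`|g - _|]distrC; lra.
Qed.
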